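(* For every $n\ge 1$, $s(n)>0$ if and only if there exist an integer $j\ge 2$ and nonnegative integers $t_2,t_3,\dots,t_j$ with $t_j\ge 1$ such that $$p_n = 2^{t_2}3^{t_3}\cdots j^{t_j} + t_2+2t_3+\dots+(j-1)t_j+3 .$$ (That is: either $p_n=2^{t_2}+t_2+3$ for some $t_2\ge1$, or $p_n=2^{t_2}3^{t_3}+t_2+2t_3+3$ for some $t_2\ge0,t_3\ge1$, or $p_n=2^{t_2}3^{t_3}4^{t_4}+t_2+2t_3+3t_4+3$ for some $t_2,t_3\ge0,t_4\ge1$, and so on.)
   Context: $p_n$ denotes the $n$-th prime ($p_1=2$). For an integer $k\ge 3$, say that a positive integer $m$ is represented by $F_k$ if there exist integers $1\le x_1\le x_2\le\dots\le x_k$ with $x_1x_2\cdots x_k+x_1+\dots+x_k=m$. For $n\ge 1$, $s(n)$ is the smallest integer $k\ge 3$ such that $p_n+k-3$ is represented by $F_k$, and $s(n)=0$ if no such $k\ge 3$ exists. *)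

From mathcomp Require Import all_boot.
From mathcomp Require Import boolp.
Set Implicit Arguments. Unset Strict Implicit. Unset Printing Implicit Defensive.

Lemma next_prime_ex m : exists p, (m < p) && prime p.
Proof. by case: (prime_above m) => p Hmp Hp; exists p; rewrite Hmp Hp. Qed.

Definition next_prime (m : nat) : nat := ex_minn (next_prime_ex m).

(* p_ n = the n-th prime, with p_ 1 = 2 (p_ 0 is a junk value, also 2). *)
Definition p_ (n : nat) : nat := iter n.-1 next_prime 2.

Definition represented (k m : nat) : Prop :=
  exists xs : seq nat,
    [/\ size xs = k, sorted leq xs, all (fun x => 0 < x) xs &
        \prod_(x <- xs) x + \sum_(x <- xs) x = m].

Definition s_good (n k : nat) : bool :=
  `[< 3 <= k /\ represented k (p_ n + k - 3) >].

Definition s (n : nat) : nat :=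
  match pselect (exists k, s_good n k) with
  | left H => ex_minn H
  | right _ => 0
  end.

(* A representation of m by F_k is a multiset of k positive integers; record
   it by its largest element j and the multiplicities t_1, ..., t_j.  Then the
   product is 2^t_2 ... j^t_j and the sum is k + t_2 + 2 t_3 + ... + (j-1) t_j,
   so p + k - 3 is represented by F_k exactly when p = 2^t_2 ... j^t_j +
   t_2 + ... + (j-1) t_j + 3.  The multiplicity t_1 of 1 is free, which lets
   us pad any such multiset to k >= 3 elements, and j >= 2 is forced because
   otherwise p = 4. *)

From mathcomp Require Import all_boot.
From mathcomp Require Import boolp zify.

Set Implicit Arguments.
Unset Strict Implicit.
Unset Printing Implicit Defensive.

Lemma prime_p n : prime (p_ n).
Proof.
rewrite /p_; elim: n.-1 => [//|m _] /=.
by rewrite /next_prime; case: ex_minnP => p /andP[].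
Qed.

Lemma s_gt0 n : 0 < s n <-> exists k, s_good n k.
Proof.
rewrite /s; case: pselect => [k_ex|//]; split => // _.
by case: ex_minnP => k /asboolP[k3 _] _; lia.
Qed.

Lemma bigmax_mem (s : seq nat) : s != [::] -> \max_(x <- s) x \in s.
Proof.
elim: s => [//|x [|y s] IHs] _; first by rewrite big_seq1 mem_seq1.
rewrite big_cons in_cons; case: (leqP x) => _; last by rewrite eqxx.
by rewrite IHs ?orbT.
Qed.

Lemma represented_sort (xs : seq nat) : all (fun x => 0 < x) xs ->
  represented (size xs) (\prod_(x <- xs) x + \sum_(x <- xs) x).
Proof.
move=> xs_pos; exists (sort leq xs); split.
- exact: size_sort.
- exact: sort_sorted leq_total _.
- by rewrite all_sort.
- by rewrite !(perm_big _ (permEl (perm_sort leq xs))).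
Qed.

Section Multiplicities.

Variable j : nat.
Implicit Type t : nat -> nat.

Definition with_multiplicities t : seq nat :=
  flatten [seq nseq (t i) i | i <- index_iota 1 j.+1].

Definition Fexcess t : nat :=
  \prod_(2 <= i < j.+1) i ^ t i + \sum_(2 <= i < j.+1) (i - 1) * t i.

Lemma Fexcess_small t : j <= 1 -> Fexcess t = 1.
Proof. by move=> j1; rewrite /Fexcess !big_geq. Qed.

Lemma size_with_multiplicities t :
  size (with_multiplicities t) = \sum_(1 <= i < j.+1) t i.
Proof.
rewrite -sum1_size big_flatten big_map; apply: eq_bigr => i _.
by rewrite sum1_size size_nseq.
Qed.

Lemma with_multiplicities_gt0 t : all (fun x => 0 < x) (with_multiplicities t).
Proof.
apply/allP => x /flatten_mapP[i]; rewrite mem_index_iota mem_nseq.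
by case/andP=> i1 _ /andP[_ /eqP->].
Qed.

Lemma F_with_multiplicities t (xs := with_multiplicities t) :
  \prod_(x <- xs) x + \sum_(x <- xs) x = size xs + Fexcess t.
Proof.
have prodE : \prod_(x <- xs) x = \prod_(1 <= i < j.+1) i ^ t i.
  rewrite big_flatten big_map; apply: eq_bigr => i _.
  by rewrite big_nseq iter_muln_1.
have sumE : \sum_(x <- xs) x = \sum_(1 <= i < j.+1) (t i + (i - 1) * t i).
  rewrite big_flatten big_map; apply: eq_big_nat => i /andP[i1 _].
  by rewrite big_nseq iter_addn_0 -{1}(subnK i1) mulnDl mul1n addnC.
rewrite size_with_multiplicities prodE sumE /Fexcess.
have [j0|j_gt0] := posnP j; first by rewrite j0 !big_geq.
rewrite big_split /= big_ltn // [in X in _ + (_ + X)]big_ltn //=.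
by rewrite exp1n mul1n subnn mul0n add0n; lia.
Qed.

Lemma perm_with_count (xs : seq nat) : all (fun x => 0 < x <= j) xs ->
  perm_eq xs (with_multiplicities (fun i => count_mem i xs)).
Proof.
move=> /allP xs_bnd; apply/allP => y _; apply/eqP.
rewrite count_flatten -map_comp sumnE big_map /=.
under eq_bigr do rewrite count_nseq /=.
have [yr|yNr] := boolP (y \in index_iota 1 j.+1).
  rewrite (bigD1_seq y) ?iota_uniq //= eqxx mul1n big1 ?addn0 // => i iy.
  by rewrite (negbTE iy) mul0n.
have yNxs : y \notin xs.
  by apply: contra yNr => /xs_bnd; rewrite mem_index_iota.
rewrite (count_memPn yNxs) big1_seq // => i /andP[_ ir].
by rewrite (_ : (i == y) = false) //; apply: contraNF yNr => /eqP <-.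
Qed.

End Multiplicities.

Lemma represented_Fexcess k m : 0 < k -> represented k m ->
  exists j t, 0 < t j /\ m = k + Fexcess j t.
Proof.
move=> k_gt0 [xs [size_xs _ /allP xs_pos <-]].
pose j := \max_(x <- xs) x; pose t := fun i => count_mem i xs.
have xs_bnd : all (fun x => 0 < x <= j) xs.
  by apply/allP => x xxs; rewrite xs_pos //= leq_bigmax_seq.
have permE := perm_with_count xs_bnd.
exists j, t; split.
- rewrite /t -has_count has_pred1; apply: bigmax_mem.
  by rewrite -size_eq0 size_xs -lt0n.
- rewrite -size_xs (perm_size permE) !(perm_big _ permE) /=.
  exact: F_with_multiplicities.
Qed.

Lemma represented_of_Fexcess j t : 0 < j ->
  exists k, 3 <= k /\ represented k (k + Fexcess j t).
Proof.
move=> j_gt0; pose t' i := if i == 1 then 3 else t i.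
have FexcessE : Fexcess j t' = Fexcess j t.
  by congr (_ + _); apply: eq_big_nat => i /andP[i2 _]; rewrite /t' ifN //; lia.
exists (size (with_multiplicities j t')); split.
- by rewrite size_with_multiplicities big_ltn.
- rewrite -FexcessE -F_with_multiplicities.
  exact/represented_sort/with_multiplicities_gt0.
Qed.

Theorem proposition5 (n : nat) (hn : 1 <= n) :
  0 < s n <->
  exists (j : nat) (t : nat -> nat),
    [/\ 2 <= j, 1 <= t j &
        p_ n = \prod_(2 <= i < j.+1) i ^ t i + \sum_(2 <= i < j.+1) (i - 1) * t i + 3].
Proof.
rewrite s_gt0; split.
- case=> k /asboolP[k3 /(represented_Fexcess (ltnW (ltnW k3)))[j [t [tj pE]]]].
  have {}pE : p_ n = Fexcess j t + 3 by lia.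
  have j2 : 2 <= j.
    by rewrite ltnNge; apply: contraL (prime_p n) => j1; rewrite pE Fexcess_small.
  by exists j, t.
- case=> j [t [j2 _ pE]]; rewrite -/(Fexcess j t) in pE.
  have [k [k3 repr]] := represented_of_Fexcess t (ltnW j2).
  exists k; apply/asboolP; split => //.
  by have -> : p_ n + k - 3 = k + Fexcess j t by lia.
Qed.
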